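(* Let $E$ be a symmetric operator defined on a dense domain $\mathcal D$ of a Hilbert space $\mathcal H$ (real or complex). Let $d_1,d_2,\tilde d_1,\tilde d_2$ be real numbers with \[ \tilde d_1\le d_1,d_2\le\tilde d_2,\qquad\tilde d_1\ne\tilde d_2,\qquad\tilde d_1+\tilde d_2=d_1+d_2. \] If there is an orthonormal set $\{f_1,f_2\}\subset\mathcal D$ with $\langle Ef_i,f_i\rangle=\tilde d_i$ for $i=1,2$, then there exist $\alpha$ with \[ \frac{\tilde d_2-d_1}{\tilde d_2-\tilde d_1}\le\alpha\le1 \] and $\theta\in[0,2\pi)$ such that, setting \[ e_1=\sqrt\alpha\,f_1+\sqrt{1-\alpha}\,e^{i\theta}f_2,\qquad e_2=\sqrt{1-\alpha}\,f_1-\sqrt\alpha\,e^{i\theta}f_2, \] we have $\langle Ee_i,e_i\rangle=d_i$ for $i=1,2$. Moreover, if $\mathcal H$ is a real Hilbert space then $e^{i\theta}=\pm1$, and if the inequalities $\tilde d_1\le d_1,d_2\le\tilde d_2$ are all strict, then $\alpha<1$.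
   Context: $E$ symmetric means $\langle Ef,g\rangle=\langle f,Eg\rangle$ for all $f,g\in\mathcal D$. *)

From HB Require Import structures.
From mathcomp Require Import all_boot all_order all_algebra.
From mathcomp Require Import all_classical all_reals all_analysis.
From mathcomp Require Import complex.
Set Implicit Arguments. Unset Strict Implicit. Unset Printing Implicit Defensive.
Import Order.TTheory GRing.Theory Num.Theory.
Import numFieldNormedType.Exports.
Local Open Scope classical_set_scope.
Local Open Scope ring_scope.

(** [ip] is an inner product on the normed space [H] over the scalar field [K]
    (with conjugation [cj]: identity for real, complex conjugation for complex
    scalars), linear in the first argument, conjugate symmetric, and inducing
    the norm of [H]: |x|^2 = <x,x>.  Positive definiteness follows from the
    norm axioms.  Together with [H : completeNormedModType K] this makes [H]
    a Hilbert space. *)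
Definition is_inner_product (K : numFieldType) (cj : K -> K)
    (H : normedModType K) (ip : H -> H -> K) : Prop :=
  [/\ forall (a : K) (x y z : H), ip (a *: x + y) z = a * ip x z + ip y z,
      forall x y : H, ip y x = cj (ip x y) &
      forall x : H, `|x| ^+ 2 = ip x x].

Definition is_subspace (K : numFieldType) (H : normedModType K) (D : set H) :=
  D 0 /\ forall (a : K) (x y : H), D x -> D y -> D (a *: x + y).

Definition dense_in (K : numFieldType) (H : normedModType K) (D : set H) :=
  closure D = [set: H].

Definition is_operator_on (K : numFieldType) (H : normedModType K)
    (D : set H) (E : H -> H) :=
  forall (a : K) (x y : H), D x -> D y -> E (a *: x + y) = a *: E x + E y.

Definition symmetric_on (K : numFieldType) (H : normedModType K)
    (ip : H -> H -> K) (D : set H) (E : H -> H) :=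
  forall f g, D f -> D g -> ip (E f) g = ip f (E g).

Definition orthonormal2 (K : numFieldType) (H : normedModType K)
    (ip : H -> H -> K) (f1 f2 : H) :=
  [/\ ip f1 f1 = 1, ip f2 f2 = 1 & ip f1 f2 = 0].

From HB Require Import structures.
From mathcomp Require Import all_boot all_order all_algebra.
From mathcomp Require Import all_classical all_reals all_analysis.
From mathcomp Require Import complex ring lra.
Set Implicit Arguments. Unset Strict Implicit. Unset Printing Implicit Defensive.
Import Order.TTheory GRing.Theory Num.Theory.
Import numFieldNormedType.Exports.
Local Open Scope classical_set_scope.
Local Open Scope ring_scope.

(** In the plane spanned by f1, f2 the quadratic form of E has diagonal
    entries dt1, dt2 and real off-diagonal sum c = <Ef1,f2> + <Ef2,f1>.  For
    the unit vector sqrt a f1 + s sqrt (1 - a) f2, with the sign s chosen so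
    that s c >= 0, the form equals
    g(a) = a dt1 + (1 - a) dt2 + sqrt a sqrt (1 - a) s c,
    a continuous function with g(0) = dt2 >= d1 >= dt1 = g(1); the
    intermediate value theorem gives a with g(a) = d1.  Since the cross term
    is nonnegative, a dt1 + (1 - a) dt2 <= d1, which is the lower bound on a,
    and a = 1 would force d1 = dt1.  The orthogonal vector e2 then gets
    d2 = dt1 + dt2 - d1 because the trace of the form is invariant. *)

Section MixingWeight.
Variable R : realType.

Definition mixing (dt1 dt2 k a : R) :=
  a * dt1 + (1 - a) * dt2 + Num.sqrt a * Num.sqrt (1 - a) * k.

Lemma mixing_continuous (dt1 dt2 k : R) : continuous (mixing dt1 dt2 k).
Proof.
move=> x; apply: cvgD; first apply: cvgD.
- by apply: cvgM; [exact: cvg_id | exact: cvg_cst].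
- by apply: cvgM; [apply: cvgB; [exact: cvg_cst | exact: cvg_id] | exact: cvg_cst].
- apply: cvgM; last exact: cvg_cst.
  apply: cvgM; first exact: sqrt_continuous.
  apply: (@continuous_comp _ _ _ (fun y : R => 1 - y) (@Num.sqrt R) x).
    by apply: cvgB; [exact: cvg_cst | exact: cvg_id].
  exact: sqrt_continuous.
Qed.

Lemma mixing0 (dt1 dt2 k : R) : mixing dt1 dt2 k 0 = dt2.
Proof. by rewrite /mixing subr0 sqrtr0 !(mul0r, add0r, mul1r, addr0). Qed.

Lemma mixing1 (dt1 dt2 k : R) : mixing dt1 dt2 k 1 = dt1.
Proof. by rewrite /mixing subrr sqrtr0 !(mul0r, mulr0, mul1r, addr0). Qed.

Lemma exists_mixing_weight (dt1 dt2 d k : R) :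
  dt1 < dt2 -> dt1 <= d <= dt2 -> 0 <= k ->
  exists a : R, [/\ 0 <= a, (dt2 - d) / (dt2 - dt1) <= a <= 1,
                    mixing dt1 dt2 k a = d & (dt1 < d -> a < 1)].
Proof.
move=> lt12 /andP[le1d led2] k0.
have [a /[!in_itv] /= /andP[a0 a1] ga] : exists2 a, a \in `[0, 1] & mixing dt1 dt2 k a = d.
  apply: IVT => //; first exact/continuous_subspaceT/mixing_continuous.
  by rewrite mixing0 mixing1 ge_min le_max le1d led2 orbT.
have cross0 : 0 <= Num.sqrt a * Num.sqrt (1 - a) * k.
  by rewrite !mulr_ge0 ?sqrtr_ge0.
exists a; split => //.
- rewrite a1 andbT ler_pdivrMr ?subr_gt0 //.
  by move: ga cross0; rewrite /mixing; lra.
- move=> lt1d; rewrite lt_neqAle a1 andbT; apply: contraTneq lt1d => a_eq1.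
  by rewrite -ga a_eq1 mixing1 ltxx.
Qed.

Lemma exists_sign_nonneg_mul (c : R) : exists2 s : R, s = 1 \/ s = -1 & 0 <= s * c.
Proof.
have [c0 | c0] := leP 0 c; first by exists 1; [left | rewrite mul1r].
by exists (-1); [right | rewrite mulN1r oppr_ge0 ltW].
Qed.

End MixingWeight.

Section Sesquilinear.
Variables (K : numFieldType) (cj : {rmorphism K -> K}).
Variables (H : normedModType K) (ip : H -> H -> K).
Hypothesis hip : is_inner_product cj ip.

Lemma ip0l z : ip 0 z = 0.
Proof.
case: hip => lin _ _; have := lin 1 0 0 z; rewrite scale1r addr0 mul1r.
by move/(congr1 (fun v => v - ip 0 z)); rewrite subrr addrK => <-.
Qed.

Lemma ipDl x y z : ip (x + y) z = ip x z + ip y z.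
Proof. by case: hip => lin _ _; have := lin 1 x y z; rewrite scale1r mul1r. Qed.

Lemma ipZl a x z : ip (a *: x) z = a * ip x z.
Proof. by case: hip => lin _ _; have := lin a x 0 z; rewrite addr0 ip0l addr0. Qed.

Lemma ipDr x y z : ip z (x + y) = ip z x + ip z y.
Proof. by case: hip => _ sym _; rewrite sym ipDl rmorphD -!sym. Qed.

Lemma ipZr a x z : ip z (a *: x) = cj a * ip z x.
Proof. by case: hip => _ sym _; rewrite sym ipZl rmorphM -!sym. Qed.

Lemma ip_operator_comb2 (D : set H) (E : H -> H) f1 f2 a b :
  is_subspace D -> is_operator_on D E -> D f1 -> D f2 ->
  ip (E (a *: f1 + b *: f2)) (a *: f1 + b *: f2) =
    a * cj a * ip (E f1) f1 + a * cj b * ip (E f1) f2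
    + (b * cj a * ip (E f2) f1 + b * cj b * ip (E f2) f2).
Proof.
move=> [D0 Dcomb] linE D1 D2.
have E0 : E 0 = 0.
  have := linE 1 0 0 D0 D0; rewrite !scale1r addr0.
  by move/(congr1 (fun v => v - E 0)); rewrite subrr addrK => <-.
have Db : D (b *: f2) by rewrite -[b *: f2]addr0; apply: Dcomb.
have Eb : E (b *: f2) = b *: E f2 by rewrite -[b *: f2]addr0 linE // E0 addr0.
by rewrite linE // Eb !ipDl !ipDr !ipZl !ipZr !mulrA.
Qed.

End Sesquilinear.

(* [sa], [sb] and [s] play the roles of sqrt a, sqrt (1 - a) and the sign. *)
Lemma rotated_diagonal (R : comPzRingType) (a sa sb s w11 w12 w21 w22 c d1 d2 : R) :
  sa * sa = a -> sb * sb = 1 - a -> s * s = 1 -> w12 + w21 = c ->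
  a * w11 + (1 - a) * w22 + sa * sb * (s * c) = d1 -> w11 + w22 = d1 + d2 ->
  sa * sa * w11 + sa * (sb * s) * w12
    + (sb * s * sa * w21 + sb * s * (sb * s) * w22) = d1 /\
  sb * sb * w11 + sb * (- (sa * s)) * w12
    + (- (sa * s) * sb * w21 + - (sa * s) * (- (sa * s)) * w22) = d2.
Proof.
move=> sa2 sb2 s2 <- diag1 trace.
have ss x y : x * s * (y * s) = x * y by rewrite mulrACA s2 mulr1.
have -> : d2 = w11 + w22 - d1 by rewrite trace addrAC subrr add0r.
by rewrite -diag1 mulrNN !ss mulNr !mulrN mulNr sa2 sb2; split; ring.
Qed.

Section RotationInPlane.
Variables (R : realType) (K : numFieldType).
Variables (emb : {rmorphism R -> K}) (cj : {rmorphism K -> K}).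
Hypothesis cj_emb : forall x, cj (emb x) = emb x.

Lemma rotation_attains_diagonal (H : normedModType K) (ip : H -> H -> K)
    (D : set H) (E : H -> H) (d1 d2 dt1 dt2 c : R) (f1 f2 : H) :
  is_inner_product cj ip -> is_subspace D -> is_operator_on D E ->
  dt1 <= d1 <= dt2 -> dt1 < dt2 -> dt1 + dt2 = d1 + d2 -> D f1 -> D f2 ->
  ip (E f1) f1 = emb dt1 -> ip (E f2) f2 = emb dt2 ->
  ip (E f1) f2 + ip (E f2) f1 = emb c ->
  exists a s : R,
    [/\ (dt2 - d1) / (dt2 - dt1) <= a <= 1, s = 1 \/ s = -1,
        let e1 := emb (Num.sqrt a) *: f1 + (emb (Num.sqrt (1 - a)) * emb s) *: f2 in
        let e2 := emb (Num.sqrt (1 - a)) *: f1 - (emb (Num.sqrt a) * emb s) *: f2 in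
        ip (E e1) e1 = emb d1 /\ ip (E e2) e2 = emb d2
      & dt1 < d1 -> a < 1].
Proof.
move=> hip hD linE hd1 lt12 trace D1 D2 w11 w22 offdiag.
have [s s_sign sc0] := exists_sign_nonneg_mul c.
have [a [a0 a_bounds ga a_lt1]] := exists_mixing_weight lt12 hd1 sc0.
exists a, s; split => //=.
have s2 : s * s = 1 by case: s_sign => ->; rewrite ?mulrNN mulr1.
have sqrt_a2 : emb (Num.sqrt a) * emb (Num.sqrt a) = emb a.
  by rewrite -rmorphM -expr2 sqr_sqrtr.
have sqrt_1a2 : emb (Num.sqrt (1 - a)) * emb (Num.sqrt (1 - a)) = 1 - emb a.
  by rewrite -rmorphM -expr2 sqr_sqrtr ?subr_ge0 ?rmorphB ?rmorph1 //; case/andP: a_bounds.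
have emb_s2 : emb s * emb s = 1 by rewrite -rmorphM s2 rmorph1.
have emb_ga : emb a * emb dt1 + (1 - emb a) * emb dt2
    + emb (Num.sqrt a) * emb (Num.sqrt (1 - a)) * (emb s * emb c) = emb d1.
  by rewrite -ga /mixing !rmorphD !rmorphM rmorphB rmorph1.
have emb_trace : emb dt1 + emb dt2 = emb d1 + emb d2 by rewrite -!rmorphD trace.
rewrite -scaleNr !(ip_operator_comb2 hip _ _ hD linE D1 D2) !rmorphN !rmorphM.
rewrite !cj_emb w11 w22.
exact: (rotated_diagonal sqrt_a2 sqrt_1a2 emb_s2 offdiag emb_ga emb_trace).
Qed.

End RotationInPlane.

Lemma ip_offdiag_sum_real (R : realType) (H : normedModType R[i]) (ip : H -> H -> R[i])
    (D : set H) (E : H -> H) (f1 f2 : H) :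
  is_inner_product (@conjc R) ip -> symmetric_on ip D E -> D f1 -> D f2 ->
  ip (E f1) f2 + ip (E f2) f1 = (2 * complex.Re (ip (E f1) f2))%:C%C.
Proof.
move=> [_ sym _] symE D1 D2.
by rewrite [ip (E f2) f1]symE // [ip f2 _]sym addcJ rmorphM rmorph_nat.
Qed.

Lemma angle_of_sign (R : realType) (s : R) :
  s = 1 \/ s = -1 ->
  exists2 theta : R, 0 <= theta < 2 * pi & (cos theta +i* sin theta)%C = s%:C%C.
Proof.
have pi0 := pi_gt0 R.
case=> ->; [exists 0 | exists pi]; rewrite ?cos0 ?sin0 ?cospi ?sinpi //;
  apply/andP; split; lra.
Qed.

Theorem lemma2p7 (R : realType) :
  (* real Hilbert space *)
  (forall (H : completeNormedModType R) (ip : H -> H -> R) (D : set H)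
          (E : H -> H) (d1 d2 dt1 dt2 : R) (f1 f2 : H),
    is_inner_product id ip -> is_subspace D -> dense_in D ->
    is_operator_on D E -> symmetric_on ip D E ->
    dt1 <= d1 <= dt2 -> dt1 <= d2 <= dt2 -> dt1 != dt2 -> dt1 + dt2 = d1 + d2 ->
    D f1 -> D f2 -> orthonormal2 ip f1 f2 ->
    ip (E f1) f1 = dt1 -> ip (E f2) f2 = dt2 ->
    exists alpha : R,
      [/\ (dt2 - d1) / (dt2 - dt1) <= alpha <= 1 ,
          exists s : R, (s = 1 \/ s = -1) /\
            (let e1 := Num.sqrt alpha *: f1 + (Num.sqrt (1 - alpha) * s) *: f2 in
             let e2 := Num.sqrt (1 - alpha) *: f1 - (Num.sqrt alpha * s) *: f2 in
             ip (E e1) e1 = d1 /\ ip (E e2) e2 = d2) &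
          (dt1 < d1 < dt2 -> dt1 < d2 < dt2 -> alpha < 1)])
  /\
  (* complex Hilbert space *)
  (forall (H : completeNormedModType R[i]) (ip : H -> H -> R[i]) (D : set H)
          (E : H -> H) (d1 d2 dt1 dt2 : R) (f1 f2 : H),
    is_inner_product (@conjc R) ip -> is_subspace D -> dense_in D ->
    is_operator_on D E -> symmetric_on ip D E ->
    dt1 <= d1 <= dt2 -> dt1 <= d2 <= dt2 -> dt1 != dt2 -> dt1 + dt2 = d1 + d2 ->
    D f1 -> D f2 -> orthonormal2 ip f1 f2 ->
    ip (E f1) f1 = dt1%:C%C -> ip (E f2) f2 = dt2%:C%C ->
    exists alpha : R,
      [/\ (dt2 - d1) / (dt2 - dt1) <= alpha <= 1 ,
          exists theta : R, 0 <= theta < 2 * pi /\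
            (let u : R[i] := (cos theta +i* sin theta)%C in
             let e1 := (Num.sqrt alpha)%:C%C *: f1
                       + ((Num.sqrt (1 - alpha))%:C%C * u) *: f2 in
             let e2 := (Num.sqrt (1 - alpha))%:C%C *: f1
                       - ((Num.sqrt alpha)%:C%C * u) *: f2 in
             ip (E e1) e1 = d1%:C%C /\ ip (E e2) e2 = d2%:C%C) &
          (dt1 < d1 < dt2 -> dt1 < d2 < dt2 -> alpha < 1)]).
Proof.
split=> H ip D E d1 d2 dt1 dt2 f1 f2 hip hD _ linE symE hd1 _ neq12 trace
    D1 D2 _ w11 w22;
  have lt12 : dt1 < dt2 by case/andP: hd1 => le1 le2; rewrite lt_neqAle neq12 (le_trans le1 le2).
- have [a [s [a_bounds s_sign diag a_lt1]]] :=
    rotation_attains_diagonal (emb := idfun) (cj := idfun) (fun _ => erefl)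
      hip hD linE hd1 lt12 trace D1 D2 w11 w22 erefl.
  exists a; split => //; first by exists s.
  by move=> /andP[] /a_lt1.
- have [a [s [a_bounds s_sign diag a_lt1]]] :=
    rotation_attains_diagonal (emb := real_complex R) (cj := conjc)
      (@conjc_real R) hip hD linE hd1 lt12 trace D1 D2 w11 w22
      (ip_offdiag_sum_real hip symE D1 D2).
  exists a; split=> //; last by move=> /andP[] /a_lt1.
  have [theta theta_range u_sign] := angle_of_sign s_sign.
  by exists theta; split => //=; rewrite u_sign.
Qed.
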